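(* If there exists an $(N,NK,M,R)$ $\mathcal D_{RS}$-non-private scheme, then there exists an $(N,K,M,R)$-private scheme.
   Context: Files $W_0,\dots,W_{N-1}$ independent, each uniform on $[2^F]=\{0,\dots,2^F-1\}$, $\bar W=(W_0,\dots,W_{N-1})$; $[n]=\{0,\dots,n-1\}$. Non-private scheme for $N$ files and $L$ users with memory $M$ and rate $R$: cache encoders $C_j:[2^F]^N\to[2^{MF}]$ ($j\in[L]$), transmission encoder $E:[2^F]^N\times[N]^L\to[2^{RF}]$ (the demand vector is also transmitted), and decoders $G_j$ with $W_{d_j}=G_j(\bar d,E(\bar W,\bar d),C_j(\bar W))$. For a subset $\mathcal D\subseteq[N]^L$ of demand vectors, a $\mathcal D$-non-private scheme is one for which this decoding condition holds for all $\bar W$ and all $\bar d\in\mathcal D$. Restricted demand subset $\mathcal D_{RS}$ for $N$ files and $L=NK$ users: writing $\bar d\in[N]^{NK}$ as $K$ consecutive blocks $(\bar d^{(0)},\dots,\bar d^{(K-1)})$ of length $N$, $\mathcal D_{RS}$ is the set of all $\bar d$ such that each block $\bar d^{(i)}$ is a cyclic shift of $(0,1,\dots,N-1)$. Private scheme $(N,K,M,R)$: $K$ users with independent uniform demands $D_k\in[N]$, $\bar D=(D_0,\dots,D_{K-1})$, $\tilde D_k$ = all demands except $D_k$; user $k$ shares a key $S_k$ (finite alphabet) with the server, server private randomness $P$ (finite alphabet), all of $P$, $S_k$, $D_k$, $W_i$ mutually independent; cache $Z_k=(C_k(S_k,P,\bar W),S_k)$ with $C_k$ valued in $[2^{MF}]$;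 broadcast $X=(E(\bar W,\bar D,P,\bar S),J(\bar D,P,\bar S))$ with $E$ valued in $[2^{RF}]$ and $J$ valued in a finite set whose $\log_2$-size is negligible compared to $F$; user $k$ recovers $W_{D_k}$ exactly from $(D_k,S_k,X,Z_k)$; and $I(\tilde D_k;Z_k,X,D_k)=0$ for all $k$. *)

From HB Require Import structures.
From mathcomp Require Import all_boot all_order all_algebra.
From mathcomp Require Import all_classical all_reals all_analysis.

Set Implicit Arguments. Unset Strict Implicit. Unset Printing Implicit Defensive.
Import Order.TTheory GRing.Theory Num.Theory.
Local Open Scope ring_scope.

(* File library: N files of F bits each, W_i in [2^F]. *)
Definition files (N F : nat) := {ffun 'I_N -> 'I_(2 ^ F)}.

(* Caches take M*F bits, i.e. values in [2^(mF)] with mF = M*F;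
   the transmission takes R*F bits, i.e. values in [2^(rF)] with rF = R*F.
   The demand vector d is given to the decoders (it is also transmitted). *)
Definition nonprivate_scheme (N L F mF rF : nat)
    (D : {ffun 'I_L -> 'I_N} -> Prop) : Prop :=
  exists (C : 'I_L -> files N F -> 'I_(2 ^ mF))
         (E : files N F -> {ffun 'I_L -> 'I_N} -> 'I_(2 ^ rF))
         (G : 'I_L -> {ffun 'I_L -> 'I_N} -> 'I_(2 ^ rF) -> 'I_(2 ^ mF)
                -> 'I_(2 ^ F)),
    forall (W : files N F) (d : {ffun 'I_L -> 'I_N}), D d ->
      forall j : 'I_L, W (d j) = G j d (E W d) (C j W).

(* Restricted demand subset D_RS for N files and N*K users: the j-th entry
   (j = i*N + n, block i, position n < N) of each block i is (n + s_i) mod N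
   for some shift s_i, i.e. each block is a cyclic shift of (0,1,...,N-1). *)
Definition D_RS (N K : nat) (d : {ffun 'I_(N * K) -> 'I_N}) : Prop :=
  exists s : nat -> nat,
    forall j : 'I_(N * K), (nat_of_ord (d j) = ((j %% N) + s (j %/ N)) %% N)%N.

Section Info.
Variable R : realType.

Definition log2 (x : R) : R := ln x / ln 2.

Definition prob_of (Om A : finType) (p : Om -> R) (X : Om -> A) (a : A) : R :=
  \sum_(w : Om | X w == a) p w.

Definition mutual_info (Om A B : finType) (p : Om -> R)
    (X : Om -> A) (Y : Om -> B) : R :=
  \sum_(a : A) \sum_(b : B)
     let pab := prob_of p (fun w => (X w, Y w)) (a, b) in
     if pab == 0 then 0
     else pab * log2 (pab / (prob_of p X a * prob_of p Y b)).
End Info.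

(* Sample space: files, demands, server randomness P, keys (S_k)_k.
   The pmf is the product of: uniform files, uniform demands, the law pP of
   P and the laws pS k of the keys S_k (so all are mutually independent).
   J takes values in TJ with #|TJ| <= B, where B will depend only on N, K
   (so log2 #|TJ| is negligible compared to F). *)
Definition private_scheme (R : realType) (N K F mF rF B : nat) : Prop :=
  exists (TP TS TJ : finType) (pP : TP -> R) (pS : 'I_K -> TS -> R),
    [/\ (forall p, 0 <= pP p), \sum_(p : TP) pP p = 1,
        (forall k s, 0 <= pS k s), (forall k, \sum_(s : TS) pS k s = 1)
      & (#|TJ| <= B)%N] /\
    exists (C : 'I_K -> TS -> TP -> files N F -> 'I_(2 ^ mF))
           (E : files N F -> {ffun 'I_K -> 'I_N} -> TP -> {ffun 'I_K -> TS}
                  -> 'I_(2 ^ rF))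
           (J : {ffun 'I_K -> 'I_N} -> TP -> {ffun 'I_K -> TS} -> TJ)
           (G : 'I_K -> 'I_N -> TS -> ('I_(2 ^ rF) * TJ)
                  -> ('I_(2 ^ mF) * TS) -> 'I_(2 ^ F)),
      let Om := (files N F * {ffun 'I_K -> 'I_N} * TP * {ffun 'I_K -> TS})%type in
      let prob (w : Om) : R :=
        let: (_, _, Pw, Sw) := w in
        (2 ^ F)%:R ^- N * N%:R ^- K * pP Pw * \prod_(k < K) pS k (Sw k) in
      let Wv (w : Om) := let: (W, _, _, _) := w in W in
      let Dv (w : Om) := let: (_, Dm, _, _) := w in Dm in
      let Pv (w : Om) := let: (_, _, Pw, _) := w in Pw in
      let Sv (w : Om) := let: (_, _, _, Sw) := w in Sw in
      let Z (k : 'I_K) (w : Om) := (C k (Sv w k) (Pv w) (Wv w), Sv w k) in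
      let X (w : Om) := (E (Wv w) (Dv w) (Pv w) (Sv w), J (Dv w) (Pv w) (Sv w)) in
      let Dtilde (k : 'I_K) (w : Om) :=
        [ffun j : {j : 'I_K | j != k} => Dv w (val j)] in
      (forall (w : Om), prob w != 0 -> forall k : 'I_K,
          Wv w (Dv w k) = G k (Dv w k) (Sv w k) (X w) (Z k w)) /\
      (forall k : 'I_K,
          mutual_info prob (Dtilde k) (fun w => (Z k w, X w, Dv w k)) = 0).

From HB Require Import structures.
From mathcomp Require Import all_boot all_order all_algebra.
From mathcomp Require Import all_classical all_reals all_analysis.
From mathcomp Require Import ring.
Set Implicit Arguments. Unset Strict Implicit. Unset Printing Implicit Defensive.
Import Order.TTheory GRing.Theory Num.Theory.
Local Open Scope ring_scope.

(* User k of the private scheme draws a uniform key S_k and impersonates the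
   virtual user S_k of block k of the non-private scheme.  The server serves
   the demand vector of D_RS whose block k is cyclically shifted by
   T_k = D_k - S_k, so that the virtual user S_k of block k asks for
   S_k + T_k = D_k, and it broadcasts T.  Privacy holds because
   (W, D, S) |-> (D~_k, (W, D_k, T)) is a bijection: under the uniform law D~_k
   is independent of (W, D_k, T), and the view (Z_k, X, D_k) of user k is a
   function of (W, D_k, T) alone, its key being S_k = D_k - T_k. *)

Section MutualInfo.
Variable R : realType.

Lemma mutual_info_indep (Om A B : finType) (p : Om -> R)
    (X : Om -> A) (Y : Om -> B) :
  (forall a b, prob_of p (fun w => (X w, Y w)) (a, b)
               = prob_of p X a * prob_of p Y b) ->
  mutual_info p X Y = 0.
Proof.
move=> indepXY; apply: big1 => a _; apply: big1 => b _ /=.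
case: ifP => // /negbT pab_neq0.
by rewrite -indepXY divff // /log2 ln1 mul0r mulr0.
Qed.

Lemma prob_of_const_bij (Om T A : finType) (c : R) (phi : Om -> T)
    (f : T -> A) (a : A) :
  bijective phi ->
  prob_of (fun _ => c) (fun w => f (phi w)) a = c * #|[pred t | f t == a]|%:R.
Proof.
case=> psi phiK psiK; rewrite /prob_of.
rewrite -(reindex phi (P := fun t => f t == a) (F := fun _ => c)).
  by rewrite sumr_const mulr_natr.
by exists psi => t _.
Qed.

Lemma mutual_info_const_split (Om U V A B : finType) (c : R)
    (phi : Om -> U * V) (x : U -> A) (y : V -> B) :
  bijective phi -> c * #|Om|%:R = 1 ->
  mutual_info (fun _ => c) (fun w => x (phi w).1) (fun w => y (phi w).2) = 0.
Proof.
move=> bij_phi c_uniform; apply: mutual_info_indep => a b.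
have card_joint : #|[pred t : U * V | (x t.1, y t.2) == (a, b)]|
    = (#|[pred u | x u == a]| * #|[pred v | y v == b]|)%N.
  by rewrite -cardX; apply: eq_card => -[u v]; rewrite !inE xpair_eqE.
have card_fst : #|[pred t : U * V | x t.1 == a]| = (#|[pred u | x u == a]| * #|V|)%N.
  by rewrite -cardX; apply: eq_card => -[u v]; rewrite !inE andbT.
have card_snd : #|[pred t : U * V | y t.2 == b]| = (#|U| * #|[pred v | y v == b]|)%N.
  by rewrite -cardX; apply: eq_card => -[u v]; rewrite !inE.
rewrite (prob_of_const_bij _ (fun t => (x t.1, y t.2)) _ bij_phi) card_joint.
rewrite (prob_of_const_bij _ (fun t => x t.1) _ bij_phi) card_fst.
rewrite (prob_of_const_bij _ (fun t => y t.2) _ bij_phi) card_snd.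
rewrite (bij_eq_card bij_phi) card_prod in c_uniform.
rewrite !natrM in c_uniform *.
by rewrite -[LHS]mul1r -{1}c_uniform; ring.
Qed.

End MutualInfo.

Section CyclicDemands.
Variables N K : nat.

Lemma virtual_user_subproof (k : 'I_K) (s : 'I_N.+1) : (k * N.+1 + s < N.+1 * K)%N.
Proof.
have lt_ks : (k * N.+1 + s < k.+1 * N.+1)%N by rewrite mulSn addnC ltn_add2r.
by apply: leq_trans lt_ks _; rewrite mulnC leq_mul2l ltn_ord orbT.
Qed.

Definition virtual_user (k : 'I_K) (s : 'I_N.+1) : 'I_(N.+1 * K) :=
  Ordinal (virtual_user_subproof k s).

(* Shifts are indexed by [nat] in [D_RS]; out-of-range blocks get shift 0. *)
Definition block_shift (T : {ffun 'I_K -> 'I_N.+1}) (i : nat) : nat :=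
  if insub i is Some i' then T i' else 0%N.

Definition cyclic_demands (T : {ffun 'I_K -> 'I_N.+1}) :
    {ffun 'I_(N.+1 * K) -> 'I_N.+1} :=
  [ffun j : 'I_(N.+1 * K) => inZp (j %% N.+1 + block_shift T (j %/ N.+1))].

Lemma cyclic_demands_RS T : D_RS (cyclic_demands T).
Proof. by exists (block_shift T) => j; rewrite ffunE. Qed.

Lemma cyclic_demands_virtual_user T k s :
  cyclic_demands T (virtual_user k s) = s + T k.
Proof.
apply: val_inj; rewrite ffunE /=.
rewrite divnMDl // divn_small // addn0 /block_shift valK.
by rewrite modnMDl modnDml.
Qed.

Definition key_shift (D S : {ffun 'I_K -> 'I_N.+1}) : {ffun 'I_K -> 'I_N.+1} :=
  [ffun j => D j - S j].

Lemma key_shift_recover (D S : {ffun 'I_K -> 'I_N.+1}) k : D k - key_shift D S k = S k.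
Proof. by rewrite ffunE opprB addrC subrK. Qed.

Lemma key_shiftK D : involutive (key_shift D).
Proof. by move=> S; apply/ffunP => j; rewrite [LHS]ffunE key_shift_recover. Qed.

Lemma cyclic_demands_key_shift D S k :
  cyclic_demands (key_shift D S) (virtual_user k (S k)) = D k.
Proof. by rewrite cyclic_demands_virtual_user ffunE subrKC. Qed.

End CyclicDemands.

Section DemandSplitting.
Variables (I : finType) (T : Type) (k : I).

Definition other_demands (D : {ffun I -> T}) : {ffun {j | j != k} -> T} :=
  [ffun j => D (val j)].

Definition insert_demand (u : {ffun {j | j != k} -> T}) (dk : T) : {ffun I -> T} :=
  [ffun j => if insub j is Some j' then u j' else dk].

Lemma insert_other_demands D : insert_demand (other_demands D) (D k) = D.
Proof.
apply/ffunP => j; rewrite ffunE.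
case: insubP => [j' _ <-|]; first by rewrite ffunE.
by rewrite negbK => /eqP ->.
Qed.

Lemma other_insert_demand u dk : other_demands (insert_demand u dk) = u.
Proof. by apply/ffunP => j; rewrite !ffunE valK. Qed.

Lemma insert_demand_at u dk : insert_demand u dk k = dk.
Proof. by rewrite ffunE insubF // eqxx. Qed.

End DemandSplitting.

Section SampleSplitting.
Variables N K F : nat.
Variable k : 'I_K.

Definition sample := (files N.+1 F * {ffun 'I_K -> 'I_N.+1} * unit
                      * {ffun 'I_K -> 'I_N.+1})%type.

Definition split_sample (w : sample) :
    {ffun {j | j != k} -> 'I_N.+1}
    * (files N.+1 F * 'I_N.+1 * {ffun 'I_K -> 'I_N.+1}) :=
  let: (W, D, _, keys) := w in (other_demands k D, (W, D k, key_shift D keys)).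

Definition merge_sample
    (z : {ffun {j | j != k} -> 'I_N.+1}
         * (files N.+1 F * 'I_N.+1 * {ffun 'I_K -> 'I_N.+1})) : sample :=
  let: (u, (W, dk, T)) := z in
  let D := insert_demand u dk in (W, D, tt, key_shift D T).

Lemma split_sample_bij : bijective split_sample.
Proof.
exists merge_sample.
- by case=> [[[W D] []] keys] /=; rewrite insert_other_demands key_shiftK.
- case=> u [[W dk] T] /=.
  by rewrite other_insert_demand insert_demand_at key_shiftK.
Qed.

End SampleSplitting.

Lemma private_scheme_of_nonprivate (R : realType) (N K F mF rF : nat) :
  nonprivate_scheme F mF rF (@D_RS N.+1 K) ->
  private_scheme R N.+1 K F mF rF (N.+1 ^ K).
Proof.
case=> C0 [E0 [G0 decode]].
exists unit, 'I_N.+1, {ffun 'I_K -> 'I_N.+1}, (fun _ => 1), (fun _ _ => N.+1%:R^-1).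
have N1_neq0 : N.+1%:R != 0 :> R by rewrite pnatr_eq0.
split.
  split=> [_||_ _|k|]; rewrite ?ler01 ?invr_ge0 ?ler0n ?card_ffun ?card_ord //.
    by rewrite sumr_const card_unit.
  by rewrite sumr_const card_ord -[_ *+ _]mulr_natr mulVf.
exists (fun k s _ W => C0 (virtual_user k s) W),
  (fun W D _ keys => E0 W (cyclic_demands (key_shift D keys))),
  (fun D _ keys => key_shift D keys),
  (fun k _ s XJ Zk => G0 (virtual_user k s) (cyclic_demands XJ.2) XJ.1 Zk.1).
move=> Om prob Wv Dv Pv Sv Z X Dtilde; split.
  case=> [[[W D] []] keys] _ k /=.
  by rewrite -(decode W _ (cyclic_demands_RS _)) cyclic_demands_key_shift.
move=> k.
pose c : R := (2 ^ F)%:R ^- N.+1 * N.+1%:R ^- K * 1 * N.+1%:R^-1 ^+ K.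
have -> : prob = fun _ => c.
  by apply: funext => -[[[W D] p] keys]; rewrite /prob prodr_const card_ord.
pose view (v : files N.+1 F * 'I_N.+1 * {ffun 'I_K -> 'I_N.+1}) :=
  let: (W, dk, T) := v in let s := dk - T k in
  ((C0 (virtual_user k s) W, s), (E0 W (cyclic_demands T), T), dk).
have -> : Dtilde k = fun w => id (split_sample k w).1.
  by apply: funext => -[[[W D] p] keys].
have -> : (fun w => (Z k w, X w, Dv w k)) = fun w => view (split_sample k w).2.
  apply: funext => -[[[W D] p] keys] /=.
  by rewrite key_shift_recover.
apply: (mutual_info_const_split id view (split_sample_bij N F k)).
rewrite !card_prod !card_ffun !card_ord card_unit /c !natrM !natrX.
have two_neq0 : 2 != 0 :> R by rewrite pnatr_eq0.
by rewrite !mulr1 exprVn; field; rewrite !expf_neq0.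
Qed.

(* With no files there is no possible demand vector unless K = 0, so both
   requirements hold vacuously. *)
Lemma private_scheme_no_files (R : realType) (K F mF rF : nat) :
  private_scheme R 0 K F mF rF 1.
Proof.
exists unit, unit, unit, (fun _ => 1), (fun _ _ => 1).
split.
  by split=> //; rewrite ?ler01 ?sumr_const ?card_unit.
exists (fun _ _ _ _ => Ordinal (expn_gt0 2 mF)),
  (fun _ _ _ _ => Ordinal (expn_gt0 2 rF)), (fun _ _ _ => tt),
  (fun _ _ _ _ _ => Ordinal (expn_gt0 2 F)).
move=> Om prob Wv Dv Pv Sv Z X Dtilde; split.
  by case=> [[[W D] p] keys] _ k; case: (D k).
by move=> k; apply: big1 => a _; apply: big1 => -[? []].
Qed.

Theorem theorem4 (R : realType) (N K : nat) :
  exists B : nat, forall F mF rF : nat,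
    nonprivate_scheme F mF rF (@D_RS N K) ->
    private_scheme R N K F mF rF B.
Proof.
case: N => [|N].
  by exists 1%N => F mF rF _; apply: private_scheme_no_files.
by exists (N.+1 ^ K)%N => F mF rF; apply: private_scheme_of_nonprivate.
Qed.
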